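(* For each $n\geq 2$ let $X_n$ be any set of $n$ distinct points in $\mathbb{R}^2$. Then $\lim_{n\to\infty}\rho(X_n)=1$, where $\rho(X)=P_X(M_X)/P_X(s^*_X)$.
   Context: For a finite $X=\{x_j:j\in J\}$, $P_X(s)=\sum_{j\in J}\|s-x_j\|^2+\max_{j\in J}\|s-x_j\|^2$, $s^*_X$ is its unique minimiser (the quadratic min-power centre), and $M_X=\frac{1}{|J|}\sum_jx_j$ is the centroid. *)

From Stdlib Require Import Reals List ClassicalEpsilon.
From Coquelicot Require Import Coquelicot.
Open Scope R_scope.

Definition pt : Type := (R * R)%type.

Definition sqdist (s x : pt) : R :=
  (fst s - fst x) ^ 2 + (snd s - snd x) ^ 2.

(* P_X(s) = sum_j ||s - x_j||^2 + max_j ||s - x_j||^2,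
   X given as a list of points (the max is taken over nonnegative values,
   starting from 0, which is harmless for nonempty X). *)
Definition PX (X : list pt) (s : pt) : R :=
  fold_right Rplus 0 (map (sqdist s) X) + fold_right Rmax 0 (map (sqdist s) X).

Definition centroid (X : list pt) : pt :=
  (fold_right Rplus 0 (map fst X) / INR (length X),
   fold_right Rplus 0 (map snd X) / INR (length X)).

Definition is_minimiser (X : list pt) (s : pt) : Prop :=
  forall t : pt, PX X s <= PX X t.

Definition smin (X : list pt) : pt :=
  epsilon (inhabits ((0, 0) : pt)) (is_minimiser X).

Definition rho (X : list pt) : R := PX X (centroid X) / PX X (smin X).

(* By the parallel-axis identity, sum_j |s - x_j|^2 = sum_j |M - x_j|^2 + n |s - M|^2,
   and by |a + b|^2 <= (1 + 1/l) |a|^2 + (1 + l) |b|^2 with l = n - 1,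
   (n - 1) max_j |M - x_j|^2 <= n max_j |s - x_j|^2 + n (n - 1) |s - M|^2.
   Adding up, (n - 1) P_X(M) <= n P_X(s) for every s, so 1 <= rho(X) <= n/(n-1) <= 1 + 2/n
   and rho(X_n) -> 1 by squeezing.  The minimiser s*_X exists because P_X is continuous and
   coercive, hence attains its minimum on a large enough square. *)

From Stdlib Require Import Reals List Lra Lia ClassicalEpsilon.
From Coquelicot Require Import Coquelicot.
From Corelib Require Import ssreflect ssrfun.
From mathcomp Require all_boot all_order all_algebra boolp classical_sets.
From mathcomp Require topology normedtype derive Rstruct Rstruct_topology.
Open Scope R_scope.

Definition sum_sqdist (X : list pt) (s : pt) : R := fold_right Rplus 0 (map (sqdist s) X).
Definition max_sqdist (X : list pt) (s : pt) : R := fold_right Rmax 0 (map (sqdist s) X).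

Lemma PXE (X : list pt) (s : pt) : PX X s = sum_sqdist X s + max_sqdist X s.
Proof. by []. Qed.

Lemma sqdist_ge0 (s x : pt) : 0 <= sqdist s x.
Proof. by rewrite /sqdist; apply: Rplus_le_le_0_compat; apply: pow2_ge_0. Qed.

Lemma sqdistC (s x : pt) : sqdist s x = sqdist x s.
Proof. rewrite /sqdist; ring. Qed.

Lemma sum_sqdist_ge0 (X : list pt) (s : pt) : 0 <= sum_sqdist X s.
Proof.
rewrite /sum_sqdist; elim: X => [|x X IH] /=; first lra.
have := sqdist_ge0 s x; lra.
Qed.

Lemma sqdist_le_max (X : list pt) (s x : pt) : In x X -> sqdist s x <= max_sqdist X s.
Proof.
elim: X => [|y X IH] //= [<-|xX]; first exact: Rmax_l.
exact: Rle_trans (IH xX) (Rmax_r _ _).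
Qed.

Lemma sqdist_le_PX (X : list pt) (s x : pt) : In x X -> sqdist s x <= PX X s.
Proof.
by move=> xX; rewrite PXE; have := sqdist_le_max X s x xX; have := sum_sqdist_ge0 X s; lra.
Qed.

Lemma le_sqr_of_lt_abs (b u : R) : Rabs b + 1 < Rabs u -> b <= u ^ 2.
Proof.
rewrite -pow2_abs /= => bu; have := Rle_abs b; have := Rabs_pos b; nra.
Qed.

(* MathComp is imported inside a module so that its notations (e.g. [<=] on [nat])
   do not leak into the rest of the file. *)
Module Minimiser.
Import all_boot all_order all_algebra boolp classical_sets.
Import topology normedtype derive Rstruct Rstruct_topology.
Import Order.TTheory GRing.Theory Num.Theory.

Section PlaneTopology.
Local Open Scope ring_scope.
Local Open Scope classical_set_scope.

Lemma continuous_sqdist (x : pt) : continuous (sqdist^~ x).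
Proof.
(* [r ^ 2] computes to [r * (r * 1)]. *)
have -> : sqdist^~ x = (fun s : pt =>
    (s.1 - x.1) * ((s.1 - x.1) * 1) + (s.2 - x.2) * ((s.2 - x.2) * 1)).
  by apply: funext.
have cfst : continuous (@fst R R) by move=> ?; apply: cvg_fst.
have csnd : continuous (@snd R R) by move=> ?; apply: cvg_snd.
move=> s.
have c1 : {for s, continuous (fun s : pt => s.1 - x.1)}.
  exact: (@continuousB _ R^o _ (fun s : pt => s.1) _ _ (cfst s) (cvg_cst _)).
have c2 : {for s, continuous (fun s : pt => s.2 - x.2)}.
  exact: (@continuousB _ R^o _ (fun s : pt => s.2) _ _ (csnd s) (cvg_cst _)).
exact: (@continuousD _ R^o _ _ _ _ (continuousM c1 (continuousM c1 (cvg_cst _)))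
                                (continuousM c2 (continuousM c2 (cvg_cst _)))).
Qed.

Lemma continuous_PX (X : list pt) : continuous (PX X).
Proof.
have csum : continuous (fun s => fold_right Rplus 0%R (map (sqdist s) X)).
  elim: X => [|x X IH] s /=; first exact: cvg_cst.
  exact: (@continuousD _ R^o _ _ _ _ (continuous_sqdist x s) (IH s)).
have cmax : continuous (fun s => fold_right Rmax 0%R (map (sqdist s) X)).
  elim: X {csum} => [|x X IH] s /=; first exact: cvg_cst.
  under eq_fun do rewrite RmaxE.
  exact: (@continuous_max _ _ (sqdist^~ x : pt -> R^o) _ _
            (continuous_sqdist x s) (IH s)).
by move=> s; apply: (@continuousD _ R^o _ _ _ _ (csum s) (cmax s)).
Qed.

Lemma square_min (f : pt -> R) (x : pt) (K : R) : 0 <= K -> continuous f ->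
  exists c : pt, forall t : pt,
    `|t.1 - x.1| <= K -> `|t.2 - x.2| <= K -> f c <= f t.
Proof.
move=> K0 cf.
pose A : set pt := `[x.1 - K, x.1 + K] `*` `[x.2 - K, x.2 + K].
have An0 : A !=set0.
  by exists x; split; rewrite /= in_itv /= lerBlDr lerDl K0.
have cA : compact A by apply: compact_setX; apply: segment_compact.
have [c _ cmin] := compact_EVT_min An0 cA (continuous_subspaceT cf).
by exists c => t t1 t2; apply/cmin; rewrite inE; split; rewrite /= in_itv /= -ler_distl.
Qed.

End PlaneTopology.

Local Open Scope R_scope.

Lemma exists_minimiser (X : list pt) : X <> nil -> exists s : pt, is_minimiser X s.
Proof.
(* Outside the square of half-width K around x, P_X >= |t - x|^2 > K^2 > P_X(x). *)
case: X => [//|x X] _; set B := PX (x :: X) x; set K := Rabs B + 1.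
have K0 : 0 <= K by rewrite /K; have := Rabs_pos B; lra.
have [c cmin] := square_min _ x _ (introT RleP K0) (continuous_PX (x :: X)).
have cB : PX (x :: X) c <= B by apply/RleP/cmin; rewrite subrr normr0; exact/RleP.
exists c => t.
case: (Rle_dec (Rabs (fst t - fst x)) K) => t1;
  [case: (Rle_dec (Rabs (snd t - snd x)) K) => t2 |].
- by apply/RleP/cmin; rewrite -RabsE; apply/RleP.
- have := le_sqr_of_lt_abs B (snd t - snd x) (Rnot_le_lt _ _ t2).
  have := sqdist_le_PX (x :: X) t x (in_eq _ _).
  have := pow2_ge_0 (fst t - fst x); rewrite /sqdist; lra.
- have := le_sqr_of_lt_abs B (fst t - fst x) (Rnot_le_lt _ _ t1).
  have := sqdist_le_PX (x :: X) t x (in_eq _ _).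
  have := pow2_ge_0 (snd t - snd x); rewrite /sqdist; lra.
Qed.

End Minimiser.

Lemma sum_sqdist_shift (X : list pt) (s c : pt) :
  sum_sqdist X s = sum_sqdist X c + INR (length X) * sqdist s c
    + 2 * ((fst s - fst c) * (INR (length X) * fst c - fold_right Rplus 0 (map fst X))
         + (snd s - snd c) * (INR (length X) * snd c - fold_right Rplus 0 (map snd X))).
Proof.
rewrite /sum_sqdist; elim: X => [|x X IH]; cbn [map fold_right length]; first by rewrite /=; ring.
by rewrite IH S_INR /sqdist; ring.
Qed.

Lemma sum_sqdist_centroid (X : list pt) (s : pt) : (0 < length X)%nat ->
  sum_sqdist X s = sum_sqdist X (centroid X) + INR (length X) * sqdist s (centroid X).
Proof.
move=> X_gt0; have n0 : INR (length X) <> 0 by apply: not_0_INR; lia.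
by rewrite (sum_sqdist_shift X s (centroid X)) /centroid /=; field.
Qed.

Lemma sqdist_shift (lam : R) (c s x : pt) : 0 <= lam ->
  lam * sqdist c x <= (lam + 1) * sqdist s x + lam * (lam + 1) * sqdist c s.
Proof.
(* The difference of the two sides is |lam (c - s) - (s - x)|^2. *)
case: c s x => [c1 c2] [s1 s2] [x1 x2] lam0; rewrite /sqdist /=.
have := pow2_ge_0 (lam * (c1 - s1) - (s1 - x1)).
have := pow2_ge_0 (lam * (c2 - s2) - (s2 - x2)).
have := pow2_ge_0 (c1 - s1); have := pow2_ge_0 (c2 - s2).
have := pow2_ge_0 (s1 - x1); have := pow2_ge_0 (s2 - x2).
rewrite /=; nra.
Qed.

Lemma max_sqdist_shift (lam : R) (c s : pt) (X : list pt) : 0 <= lam ->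
  lam * max_sqdist X c <= (lam + 1) * max_sqdist X s + lam * (lam + 1) * sqdist c s.
Proof.
rewrite /max_sqdist => lam0; elim: X => [|x X IH] /=.
  by have := sqdist_ge0 c s; nra.
have := sqdist_shift lam c s x lam0.
have := Rmax_l (sqdist s x) (fold_right Rmax 0 (map (sqdist s) X)).
have := Rmax_r (sqdist s x) (fold_right Rmax 0 (map (sqdist s) X)).
rewrite -RmaxRmult //; move=> *; apply: Rmax_lub; nra.
Qed.

Lemma centroid_PX_le (X : list pt) (s : pt) : (2 <= length X)%nat ->
  (INR (length X) - 1) * PX X (centroid X) <= INR (length X) * PX X s.
Proof.
move=> X_ge2; have n_ge2 : 2 <= INR (length X) by apply: (le_INR 2).
have := max_sqdist_shift (INR (length X) - 1) (centroid X) s X ltac:(lra).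
have := sum_sqdist_centroid X s ltac:(lia).
have := sum_sqdist_ge0 X (centroid X); have := sqdist_ge0 s (centroid X).
have -> : INR (length X) - 1 + 1 = INR (length X) by ring.
rewrite !PXE (sqdistC (centroid X) s); nra.
Qed.

Lemma sqdist_le0 (s x : pt) : sqdist s x <= 0 -> s = x.
Proof.
case: s x => [s1 s2] [x1 x2]; rewrite /sqdist /= => d0.
have := pow2_ge_0 (s1 - x1); have := pow2_ge_0 (s2 - x2).
by move=> *; f_equal; nra.
Qed.

Lemma PX_gt0 (X : list pt) (s x y : pt) : In x X -> In y X -> x <> y -> 0 < PX X s.
Proof.
move=> xX yX xy; case: (Rlt_le_dec 0 (PX X s)) => // P0; exfalso; apply: xy.
have sx : s = x by apply: sqdist_le0; have := sqdist_le_PX X s x xX; lra.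
have sy : s = y by apply: sqdist_le0; have := sqdist_le_PX X s y yX; lra.
by rewrite -sx -sy.
Qed.

Lemma ratio_bounds (n M m : R) : 2 <= n -> 0 < m -> m <= M -> (n - 1) * M <= n * m ->
  1 <= M / m <= 1 + 2 / n.
Proof.
move=> n_ge2 m_gt0 mM Mm.
have M_eq : M = M / m * m by field; lra.
rewrite M_eq in mM Mm; set r := M / m in mM Mm *.
have r_ge1 : 1 <= r by apply: (Rmult_le_reg_r m); lra.
have r_le : (n - 1) * r <= n by apply: (Rmult_le_reg_r m); lra.
split=> //; apply: (Rmult_le_reg_l n); first lra.
have -> : n * (1 + 2 / n) = n + 2 by field; lra.
nra.
Qed.

Lemma rho_bounds (X : list pt) : (2 <= length X)%nat -> NoDup X ->
  1 <= rho X <= 1 + 2 / INR (length X).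
Proof.
case: X => [|x [|y X]] X_ge2; try (simpl in X_ge2; lia).
move=> /NoDup_cons_iff [/not_in_cons [xy _] _].
set Y := x :: y :: X.
have smin_min : is_minimiser Y (smin Y).
  by apply: epsilon_spec; apply: Minimiser.exists_minimiser.
apply: ratio_bounds.
- by apply: (le_INR 2).
- by apply: (PX_gt0 Y _ x y) => //=; auto.
- exact: smin_min.
- exact: centroid_PX_le.
Qed.

Lemma is_lim_seq_plus_div_INR (a b : R) : is_lim_seq (fun n => a + b / INR n) a.
Proof.
have -> : Finite a = a + b * 0 by f_equal; ring.
apply: is_lim_seq_plus'; first exact: is_lim_seq_const.
have -> : Finite (b * 0) = Rbar_mult b (Rbar_inv p_infty) by [].
apply: is_lim_seq_scal_l; apply: is_lim_seq_inv => //; exact: is_lim_seq_INR.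
Qed.

Theorem corollary3 (X : nat -> list pt) :
  (forall n : nat, (2 <= n)%nat -> length (X n) = n /\ NoDup (X n)) ->
  is_lim_seq (fun n : nat => rho (X n)) 1.
Proof.
move=> HX; apply: (is_lim_seq_le_le_loc (fun=> 1) _ (fun n => 1 + 2 / INR n)).
- exists 2%nat => n n_ge2; have [len_n nodup_n] := HX n n_ge2.
  by have := rho_bounds (X n); rewrite len_n; apply.
- exact: is_lim_seq_const.
- exact: is_lim_seq_plus_div_INR.
Qed.
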